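(* Let $\mathcal{H}$ be a finite-dimensional Hilbert space, $\mathcal{O}\in\mathcal{L}(\mathcal{H})$ Hermitian, $\rho$ a quantum state on $\mathcal{H}$, $n\geq 1$ and $1\leq k\leq n$. Let \[\mathcal{O}_k=\frac{1}{n!}\sum_{\pi\in\mathfrak{S}_n}U_\pi\,U_{s_k}\,(\mathcal{O}\otimes I^{\otimes n-1})\,U_\pi^\dagger,\qquad T_k=\frac{1}{2\lfloor n/k\rfloor}\sum_{i=0}^{\lfloor n/k\rfloor-1}\left(A_i+A_i^\dagger\right),\] where $A_i=U_{s_{J_i}}\,\big(I^{\otimes ik}\otimes\mathcal{O}\otimes I^{\otimes n-ik-1}\big)$ and $J_i=(ik+1,ik+2,\ldots,ik+k)$. Then $\mathbf{Var}[\mathcal{O}_k]\leq\mathbf{Var}[T_k]$.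
   Context: $\mathfrak{S}_n$ is the symmetric group on $\{1,\ldots,n\}$; for $\pi\in\mathfrak{S}_n$, $U_\pi$ is the unitary on $\mathcal{H}^{\otimes n}$ with $U_\pi\ket{\psi_1}\cdots\ket{\psi_n}=\ket{\psi_{\pi^{-1}(1)}}\cdots\ket{\psi_{\pi^{-1}(n)}}$. $s_k$ is the cyclic shift on the first $k$ elements ($s_k(i)=i+1$ for $i<k$, $s_k(k)=1$, $s_k(i)=i$ for $i>k$). For a sequence $J=(j_1,\ldots,j_l)$ of distinct elements of $\{1,\ldots,n\}$, $s_J\in\mathfrak{S}_n$ maps $j_t\mapsto j_{t+1}$ for $t<l$, $j_l\mapsto j_1$, and fixes all other elements. For a Hermitian $\mathcal{Q}$ on $\mathcal{H}^{\otimes n}$, $\mathbf{Var}[\mathcal{Q}]=\operatorname{tr}(\mathcal{Q}^2\rho^{\otimes n})-\operatorname{tr}(\mathcal{Q}\rho^{\otimes n})^2$, the variance of the outcome of measuring $\rho^{\otimes n}$ with observable $\mathcal{Q}$. *)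

From HB Require Import structures.
From mathcomp Require Import all_boot all_order all_algebra all_fingroup.
Set Implicit Arguments. Unset Strict Implicit. Unset Printing Implicit Defensive.
Import Order.TTheory GRing.Theory Num.Theory.
Local Open Scope ring_scope.

(* The Hilbert space H is C^d (C an algebraically closed numeric field, e.g.
   the complex numbers).  H^{(x) n} has the product basis indexed by
   functions 'I_n -> 'I_d (site i carries the basis vector x i).
   Sites are numbered 0..n-1 (the paper uses 1..n). *)

Section QOps.
Variable C : numClosedFieldType.
Variables d n : nat.

Definition basis := {ffun 'I_n -> 'I_d}.

(* operators on H^{(x) n}, given by their matrix entries <y|A|x> *)
Definition nop := basis -> basis -> C.

Definition mulop (A B : nop) : nop := fun y x => \sum_(z : basis) A y z * B z x.
Definition adjop (A : nop) : nop := fun y x => (A x y)^*.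
Definition trop (A : nop) : C := \sum_(x : basis) A x x.

Definition tenspow (rho : 'M[C]_d) : nop :=
  fun y x => \prod_(i < n) rho (y i) (x i).

Definition embed (j : nat) (O : 'M[C]_d) : nop :=
  fun y x => \prod_(i < n) (if nat_of_ord i == j then O (y i) (x i)
                            else (y i == x i)%:R).

(* U_s for a permutation s of the sites:
   U_s |x_0 ... x_{n-1}> = |x_{s^-1 0} ... x_{s^-1 (n-1)}>,
   i.e. <y|U_s|x> = 1 iff y = x o s^-1 iff x = y o s. *)
Definition permop (s : 'I_n -> 'I_n) : nop :=
  fun y x => (x == [ffun i => y (s i)])%:R.

(* s_J for J = (a, a+1, ..., a+k-1) (0-based):
   a+t |-> a+t+1 for t < k-1, a+k-1 |-> a, identity elsewhere. *)
Definition shift_on (a k : nat) (i : 'I_n) : 'I_n :=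
  if ((a <= i) && (i < a + k - 1))%N then insubd i i.+1
  else if nat_of_ord i == (a + k - 1)%N then insubd i a
  else i.

Definition var (rho : 'M[C]_d) (Q : nop) : C :=
  trop (mulop (mulop Q Q) (tenspow rho)) - (trop (mulop Q (tenspow rho))) ^+ 2.

Definition Ok (O : 'M[C]_d) (k : nat) : nop :=
  fun y x => (n`!%:R)^-1 * \sum_(pi : 'S_n)
     mulop (mulop (mulop (permop pi) (permop (shift_on 0 k))) (embed 0 O))
           (adjop (permop pi)) y x.

Definition Aop (O : 'M[C]_d) (k i : nat) : nop :=
  mulop (permop (shift_on (i * k) k)) (embed (i * k) O).

Definition Tk (O : 'M[C]_d) (k : nat) : nop :=
  fun y x => ((2 * (n %/ k))%:R)^-1 *
     \sum_(i < n %/ k) (Aop O k i y x + adjop (Aop O k i) y x).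

End QOps.

Definition hermitian_op (C : numClosedFieldType) (d : nat) (A : 'M[C]_d) : Prop :=
  A = map_mx Num.conj (A^T).

Definition is_state (C : numClosedFieldType) (d : nat) (rho : 'M[C]_d) : Prop :=
  [/\ hermitian_op rho,
      (forall v : 'cV[C]_d, 0 <= ((map_mx Num.conj v)^T *m rho *m v) 0 0)
    & \tr rho = 1].
Arguments var {C d} n rho Q.
Arguments Ok {C d} n O k.
Arguments Tk {C d} n O k.

From HB Require Import structures.
From mathcomp Require Import all_boot all_order all_algebra all_fingroup zify ring.
Import Order.TTheory GRing.Theory Num.Theory.
Set Implicit Arguments. Unset Strict Implicit. Unset Printing Implicit Defensive.
Local Open Scope ring_scope.
Local Open Scope sesquilinear_scope.

(* O_k is the twirl (the average of U_pi . U_pi^dagger over S_n) of A_0, and so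
   is the twirl of T_k: each A_i is conjugate to A_0 by the permutation
   exchanging the blocks J_0 and J_i, and A_0^dagger is conjugate to A_0 by a
   reflection of J_0 that inverts the cyclic shift s_k.  Since rho^(x)n commutes
   with every U_pi, twirling keeps the mean tr(Q rho^(x)n); and averaging
   Hermitian operators can only lower the second moment, because
   sum_pi tr((U_pi Q U_pi^dagger - O_k)^2 rho^(x)n) is a sum of traces of the
   form tr(Y^2 V^dagger V) >= 0. *)

Section Matrices.
Variable C : numClosedFieldType.

Lemma trmxC_mul m n p (A : 'M[C]_(m, n)) (B : 'M[C]_(n, p)) :
  (A *m B)^t* = B^t* *m A^t*.
Proof. by rewrite trmx_mul map_mxM. Qed.

Lemma mxtrace_mul_trmxC_ge0 m n (A : 'M[C]_(m, n)) : 0 <= \tr (A *m A^t*).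
Proof.
apply: sumr_ge0 => i _; rewrite mxE; apply: sumr_ge0 => j _.
by rewrite !mxE mul_conjC_ge0.
Qed.

Lemma mxtrace_sqr_gram_ge0 m n (Y : 'M[C]_n) (V : 'M[C]_(m, n)) :
  Y^t* = Y -> 0 <= \tr (Y *m Y *m (V^t* *m V)).
Proof.
move=> Y_herm; rewrite mulmxA mxtrace_mulC !mulmxA.
have -> : V *m Y *m Y *m V^t* = (V *m Y) *m (V *m Y)^t*.
  by rewrite trmxC_mul Y_herm mulmxA.
exact: mxtrace_mul_trmxC_ge0.
Qed.

Lemma mxtrace_mean_sqr_le (I : finType) m r (X : I -> 'M[C]_m) (M : 'M[C]_m)
    (V : 'M[C]_(r, m)) :
  (0 < #|I|)%N -> (forall i, (X i)^t* = X i) -> \sum_i X i = #|I|%:R *: M ->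
  #|I|%:R * \tr (M *m M *m (V^t* *m V)) <= \sum_i \tr (X i *m X i *m (V^t* *m V)).
Proof.
move=> I_gt0 X_herm sumX; set N : C := #|I|%:R; set P := V^t* *m V.
have N_neq0 : N != 0 by rewrite pnatr_eq0 -lt0n.
have M_herm : M^t* = M.
  have -> : M = N^-1 *: \sum_i X i by rewrite sumX scalerA mulVf ?scale1r.
  apply/matrixP => a b; rewrite !mxE summxE rmorphM rmorph_sum /= fmorphV rmorph_nat.
  by congr (_ * _); rewrite summxE; apply: eq_bigr => i _; rewrite -[in RHS]X_herm !mxE.
have expand : \sum_i \tr ((X i - M) *m (X i - M) *m P) =
              \sum_i \tr (X i *m X i *m P) - N * \tr (M *m M *m P).
  transitivity (\sum_i (\tr (X i *m X i *m P) - \tr (X i *m M *m P)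
                 - (\tr (M *m X i *m P) - \tr (M *m M *m P)))).
    by apply: eq_bigr => i _; rewrite !(mulmxBl, mulmxBr) !raddfB.
  have sXM : \sum_i \tr (X i *m M *m P) = N * \tr (M *m M *m P).
    transitivity (\tr (\sum_i X i *m M *m P)); first by rewrite raddf_sum.
    by rewrite -!mulmx_suml sumX -!scalemxAl mxtraceZ.
  have sMX : \sum_i \tr (M *m X i *m P) = N * \tr (M *m M *m P).
    transitivity (\tr (\sum_i M *m X i *m P)); first by rewrite raddf_sum.
    by rewrite -mulmx_suml -mulmx_sumr sumX -scalemxAr -scalemxAl mxtraceZ.
  by rewrite !sumrB sXM sMX sumr_const -mulr_natl subrr subr0.
rewrite -subr_ge0 -expand; apply: sumr_ge0 => i _; apply: mxtrace_sqr_gram_ge0.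
by rewrite linearB map_mxB /= X_herm M_herm.
Qed.

Lemma state_gram d (rho : 'M[C]_d) :
  is_state rho -> exists B : 'M[C]_d, rho = B^t* *m B.
Proof.
case=> rho_herm rho_psd _.
have rho_normal : rho \is normalmx by apply/normalmxP; rewrite -rho_herm.
set M := spectralmx rho; set D := spectral_diag rho.
have M_unitary : M *m M^t* = 1%:M by apply/unitarymxP/spectral_unitarymx.
have rhoE : rho = M^t* *m diag_mx D *m M.
  by rewrite {1}(orthomx_spectralP rho_normal) invmx_unitary ?spectral_unitarymx.
have D_ge0 j : 0 <= D 0 j.
  have := rho_psd (M^t* *m (delta_mx j 0 : 'cV_d)).
  have -> : map_mx Num.conj (M^t* *m (delta_mx j 0 : 'cV_d)) = M^T *m delta_mx j 0.
    by rewrite map_mxM; congr (_ *m _); apply/matrixP => a b; rewrite !mxE;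
      [exact: conjCK | exact: conjC_nat].
  rewrite trmx_mul trmxK rhoE !mulmxA -[_ *m M *m M^t*]mulmxA M_unitary mulmx1.
  rewrite -[_ *m M *m M^t*]mulmxA M_unitary mulmx1 mul_mx_diag !mxE (bigD1 j) //=.
  rewrite big1 => [|l /negbTE l_neq_j]; last by rewrite !mxE l_neq_j mulr0n !mul0r.
  by rewrite !mxE eqxx mulr1 mul1r addr0.
exists (\matrix_(j, a) (sqrtC (D 0 j) * M j a)).
apply/matrixP => a b; rewrite {1}rhoE mul_mx_diag !mxE; apply: eq_bigr => j _.
rewrite !mxE rmorphM /= (geC0_conj (x := sqrtC _)) ?sqrtC_ge0 //.
rewrite -[in LHS](sqrtCK (D 0 j)); ring.
Qed.
End Matrices.

Section Operators.
Variables (C : numClosedFieldType) (d n : nat).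
Local Notation basis := (basis d n).
Local Notation nop := (nop C d n).

Definition relabel (s : 'I_n -> 'I_n) (y : basis) : basis := [ffun i => y (s i)].

Lemma relabelE s y i : relabel s y i = y (s i).
Proof. exact: ffunE. Qed.

Lemma relabelM (p q : 'S_n) y : relabel p (relabel q y) = relabel (p * q)%g y.
Proof. by apply/ffunP => i; rewrite !relabelE permM. Qed.

Lemma relabel_perm s (s_inj : injective s) : relabel (perm s_inj) =1 relabel s.
Proof. by move=> y; apply/ffunP => i; rewrite !relabelE permE. Qed.

Lemma relabel_inj (p : 'S_n) : injective (relabel p).
Proof.
move=> y z /ffunP eq_yz; apply/ffunP => i.
by have := eq_yz (p^-1 i)%g; rewrite !relabelE permKV.
Qed.

(* [permconj s A] is U_s A U_s^dagger (not U_s^dagger A U_s). *)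
Definition permconj (s : 'I_n -> 'I_n) (A : nop) : nop :=
  fun y x => A (relabel s y) (relabel s x).

Lemma permop_mulE s (A : nop) y x : mulop (permop C s) A y x = A (relabel s y) x.
Proof.
rewrite /mulop (bigD1 (relabel s y)) //= /permop eqxx mul1r big1 ?addr0 // => z.
by move=> /negbTE z_neq; rewrite z_neq mul0r.
Qed.

Lemma mul_adjop_permopE s (A : nop) y x :
  mulop A (adjop (permop C s)) y x = A y (relabel s x).
Proof.
rewrite /mulop (bigD1 (relabel s x)) //= /adjop /permop eqxx conjC_nat mulr1.
by rewrite big1 ?addr0 // => z /negbTE z_neq; rewrite z_neq conjC_nat mulr0.
Qed.

Lemma permconj_mulop (p : 'S_n) (A B : nop) :
  permconj p (mulop A B) =2 mulop (permconj p A) (permconj p B).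
Proof. by move=> y x; rewrite /permconj /mulop (reindex_inj (@relabel_inj p)). Qed.

Lemma trop_permconj (p : 'S_n) (A : nop) : trop (permconj p A) = trop A.
Proof. by rewrite /trop [RHS](reindex_inj (@relabel_inj p)). Qed.

Lemma tenspow_permconj (rho : 'M[C]_d) (p : 'S_n) :
  permconj p (tenspow (n := n) rho) =2 tenspow (n := n) rho.
Proof.
move=> y x; rewrite /tenspow [RHS](reindex_inj (@perm_inj _ p)).
by apply: eq_bigr => i _; rewrite !relabelE.
Qed.

Definition twirl (Q : nop) : nop :=
  fun y x => (n`!%:R)^-1 * \sum_(p : 'S_n) permconj p Q y x.

Lemma eq_twirl (A B : nop) : A =2 B -> twirl A =2 twirl B.
Proof. by move=> eqAB y x; congr (_ * _); apply: eq_bigr => p _; apply: eqAB. Qed.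

Lemma twirl_permconj (t : 'S_n) (A : nop) : twirl (permconj t A) =2 twirl A.
Proof.
move=> y x; congr (_ * _); rewrite [RHS](reindex_inj (mulgI t)).
by apply: eq_bigr => p _; rewrite /permconj !relabelM.
Qed.

Lemma twirl_adjop (A : nop) : twirl (adjop A) =2 adjop (twirl A).
Proof.
by move=> y x; rewrite /twirl /adjop rmorphM rmorph_sum /= fmorphV rmorph_nat.
Qed.

Definition opmx (A : nop) : 'M[C]_#|{: basis}| :=
  \matrix_(i, j) A (enum_val i) (enum_val j).

Lemma sum_enum_val (F : basis -> C) :
  \sum_z F z = \sum_(l < #|{: basis}|) F (enum_val l).
Proof. by rewrite -big_enum_val. Qed.

Lemma eq_opmx (A B : nop) : A =2 B -> opmx A = opmx B.
Proof. by move=> eqAB; apply/matrixP => i j; rewrite !mxE eqAB. Qed.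

Lemma opmx_mul (A B : nop) : opmx (mulop A B) = opmx A *m opmx B.
Proof.
apply/matrixP => i j; rewrite !mxE /mulop sum_enum_val.
by apply: eq_bigr => l _; rewrite !mxE.
Qed.

Lemma opmx_adj (A : nop) : opmx (adjop A) = (opmx A)^t*.
Proof. by apply/matrixP => i j; rewrite !mxE. Qed.

Lemma trop_opmx (A : nop) : trop A = \tr (opmx A).
Proof. by rewrite /trop sum_enum_val; apply: eq_bigr => i _; rewrite mxE. Qed.

Lemma var_opmx (rho : 'M[C]_d) (Q : nop) :
  let P := opmx (tenspow (n := n) rho) in
  var n rho Q = \tr (opmx Q *m opmx Q *m P) - \tr (opmx Q *m P) ^+ 2.
Proof. by rewrite /var !trop_opmx !opmx_mul. Qed.

Lemma eq_var (rho : 'M[C]_d) (A B : nop) : A =2 B -> var n rho A = var n rho B.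
Proof. by move=> eqAB; rewrite !var_opmx (eq_opmx eqAB). Qed.

Lemma mxtrace_opmx_permconj (p : 'S_n) (A B : nop) :
  \tr (opmx (permconj p A) *m opmx (permconj p B)) = \tr (opmx A *m opmx B).
Proof.
rewrite -!opmx_mul -!trop_opmx -(trop_permconj p (mulop A B)).
by apply: eq_bigr => y _; rewrite permconj_mulop.
Qed.

Lemma tenspow_mul (A B : 'M[C]_d) :
  tenspow (n := n) (A *m B) =2 mulop (tenspow (n := n) A) (tenspow (n := n) B).
Proof.
move=> y x; rewrite /tenspow /mulop.
under eq_bigr do rewrite mxE.
rewrite bigA_distr_bigA; apply: eq_bigr => f _.
by rewrite -big_split.
Qed.

Lemma tenspow_trmxC (A : 'M[C]_d) :
  tenspow (n := n) (A^t*) =2 adjop (tenspow (n := n) A).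
Proof.
by move=> y x; rewrite /tenspow /adjop rmorph_prod; apply: eq_bigr => i _; rewrite !mxE.
Qed.

Lemma opmx_tenspow_gram (B : 'M[C]_d) : let W := opmx (tenspow (n := n) B) in
  opmx (tenspow (n := n) (B^t* *m B)) = W^t* *m W.
Proof.
rewrite /= -opmx_adj -opmx_mul; apply: eq_opmx => y x.
by rewrite tenspow_mul; apply: eq_bigr => z _; rewrite tenspow_trmxC.
Qed.

Lemma card_Sn_gt0 : (0 < #|'S_n|)%N.
Proof. by rewrite card_Sn fact_gt0. Qed.

Lemma sum_opmx_permconj (Q : nop) :
  \sum_(p : 'S_n) opmx (permconj p Q) = #|'S_n|%:R *: opmx (twirl Q).
Proof.
apply/matrixP => i j; rewrite summxE !mxE card_Sn mulrA divff ?mul1r.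
  by apply: eq_bigr => p _; rewrite mxE.
by rewrite pnatr_eq0 -lt0n fact_gt0.
Qed.

Lemma mxtrace_permconj_tenspow (rho : 'M[C]_d) (p : 'S_n) (A : nop) :
  let P := opmx (tenspow (n := n) rho) in
  \tr (opmx (permconj p A) *m P) = \tr (opmx A *m P).
Proof.
rewrite /= -(mxtrace_opmx_permconj p A (tenspow rho)).
by congr (\tr (_ *m _)); apply: eq_opmx => y x; rewrite (tenspow_permconj rho p y x).
Qed.

Lemma mxtrace_twirl_tenspow (rho : 'M[C]_d) (Q : nop) :
  let P := opmx (tenspow (n := n) rho) in
  \tr (opmx (twirl Q) *m P) = \tr (opmx Q *m P).
Proof.
move=> P; have N_neq0 : #|'S_n|%:R != 0 :> C by rewrite pnatr_eq0 -lt0n card_Sn_gt0.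
apply: (mulfI N_neq0); rewrite -mxtraceZ scalemxAl -sum_opmx_permconj.
transitivity (\sum_(p : 'S_n) \tr (opmx (permconj p Q) *m P)).
  by rewrite (mulmx_suml P) raddf_sum.
by rewrite (eq_bigr _ (fun p _ => mxtrace_permconj_tenspow rho p Q)) sumr_const mulr_natl.
Qed.

Lemma var_twirl_le (rho : 'M[C]_d) (Q : nop) :
  is_state rho -> adjop Q =2 Q -> var n rho (twirl Q) <= var n rho Q.
Proof.
move=> rho_state Q_herm; have [B rhoE] := state_gram rho_state.
rewrite !var_opmx /= !mxtrace_twirl_tenspow lerD2r.
have X_herm (p : 'S_n) : (opmx (permconj p Q))^t* = opmx (permconj p Q).
  by rewrite -opmx_adj; apply: eq_opmx => y x; apply: Q_herm.
have sqr_twirl (p : 'S_n) : let P := opmx (tenspow rho) in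
    \tr (opmx (permconj p Q) *m opmx (permconj p Q) *m P) = \tr (opmx Q *m opmx Q *m P).
  rewrite /= -[opmx (permconj p Q) *m _]opmx_mul -[opmx Q *m _]opmx_mul.
  rewrite -(mxtrace_permconj_tenspow rho p (mulop Q Q)).
  by congr (\tr (_ *m _)); apply: eq_opmx => y x; rewrite permconj_mulop.
have := mxtrace_mean_sqr_le (opmx (tenspow B)) card_Sn_gt0 X_herm (sum_opmx_permconj Q).
rewrite -opmx_tenspow_gram -rhoE (eq_bigr _ (fun p _ => sqr_twirl p)) sumr_const.
by rewrite mulr_natl ler_pMn2r ?card_Sn_gt0.
Qed.

End Operators.

Definition shiftn (a k l : nat) : nat :=
  if (a <= l < a + k - 1)%N then l.+1 else if l == (a + k - 1)%N then a else l.

Definition block_swapn (a k l : nat) : nat :=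
  if (l < k)%N then (l + a)%N else if (a <= l < a + k)%N then (l - a)%N else l.

(* The reflection l |-> 1 - l (mod k) of the block [0, k): it conjugates the
   cyclic shift of the block to its inverse and exchanges 0 with its image 1. *)
Definition reflectn (k l : nat) : nat :=
  if (1 < k)%N && (l < 2)%N then (1 - l)%N else if (1 < l < k)%N then (k.+1 - l)%N else l.

Lemma block_swapnK a k : a = 0%N \/ (k <= a)%N -> involutive (block_swapn a k).
Proof. by move=> ha l; rewrite /block_swapn; (repeat case: ifP => /=); lia. Qed.

Lemma block_swapn_shift a k l : (0 < k)%N -> a = 0%N \/ (k <= a)%N ->
  block_swapn a k (shiftn 0 k l) = shiftn a k (block_swapn a k l).
Proof. by move=> k_gt0 ha; rewrite /block_swapn /shiftn; (repeat case: ifP => /=); lia. Qed.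

Lemma reflectnK k : involutive (reflectn k).
Proof. by move=> l; rewrite /reflectn; (repeat case: ifP => /=); lia. Qed.

Lemma shiftn0_inj k : injective (shiftn 0 k).
Proof. by move=> l l'; rewrite /shiftn; (repeat case: ifP => /=); lia. Qed.

Lemma shiftn_reflectn k l : (0 < k)%N ->
  shiftn 0 k (reflectn k (shiftn 0 k l)) = reflectn k l.
Proof. by move=> k_gt0; rewrite /reflectn /shiftn; (repeat case: ifP => /=); lia. Qed.

Lemma reflectn_shiftn0 k : (0 < k)%N -> reflectn k (shiftn 0 k 0) = 0%N.
Proof. by move=> k_gt0; rewrite /reflectn /shiftn; (repeat case: ifP => /=); lia. Qed.

Section Sites.
Variable n : nat.

Lemma val_shift_on a k (l : 'I_n) : (0 < k)%N -> (a + k <= n)%N ->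
  shift_on a k l = shiftn a k l :> nat.
Proof.
move=> k_gt0 akn; have l_lt := ltn_ord l; rewrite /shift_on /shiftn.
case: ifP => [l_in|_]; first by rewrite insubdK //=; lia.
by case: ifP => // /eqP l_last; rewrite insubdK //=; lia.
Qed.

Definition block_swap a k (l : 'I_n) : 'I_n := insubd l (block_swapn a k l).

Definition block_reflect k (l : 'I_n) : 'I_n := insubd l (reflectn k l).

Lemma val_block_swap a k l :
  (a + k <= n)%N -> block_swap a k l = block_swapn a k l :> nat.
Proof.
move=> akn; have l_lt := ltn_ord l.
by rewrite insubdK // /block_swapn; (repeat case: ifP => /=); lia.
Qed.

Lemma val_block_reflect k l : (k <= n)%N -> block_reflect k l = reflectn k l :> nat.
Proof.
move=> kn; have l_lt := ltn_ord l.
by rewrite insubdK // /reflectn; (repeat case: ifP => /=); lia.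
Qed.

Section Block.
Variables a k : nat.
Hypotheses (k_gt0 : (0 < k)%N) (akn : (a + k <= n)%N) (a_cases : a = 0%N \/ (k <= a)%N).

Lemma block_swap_inj : injective (block_swap a k).
Proof.
apply: (can_inj (g := block_swap a k)) => l; apply: ord_inj.
by rewrite !val_block_swap // block_swapnK.
Qed.

Lemma block_swap_shift :
  {morph block_swap a k : l / shift_on 0 k l >-> shift_on a k l}.
Proof.
have k_le_n : (0 + k <= n)%N by lia.
move=> l; apply: ord_inj => /=.
by rewrite !(val_block_swap, val_shift_on) // block_swapn_shift.
Qed.

End Block.

Section FirstBlock.
Variable k : nat.
Hypotheses (k_gt0 : (0 < k)%N) (k_le_n : (k <= n)%N).

Lemma block_reflect_inj : injective (block_reflect k).
Proof.
apply: (can_inj (g := block_reflect k)) => l; apply: ord_inj.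
by rewrite !val_block_reflect // reflectnK.
Qed.

Lemma shift_on0_inj : injective (@shift_on n 0 k).
Proof.
by move=> l l' /(congr1 val) /=; rewrite !val_shift_on // => /shiftn0_inj /ord_inj.
Qed.

Lemma shift_block_reflect l :
  shift_on 0 k (block_reflect k (shift_on 0 k l)) = block_reflect k l.
Proof.
by apply: ord_inj; rewrite !(val_shift_on, val_block_reflect) // shiftn_reflectn.
Qed.

Lemma block_reflect_shift0 (j : 'I_n) :
  j = 0%N :> nat -> block_reflect k (shift_on 0 k j) = j.
Proof.
move=> j0; apply: ord_inj.
by rewrite val_block_reflect // val_shift_on // j0 reflectn_shiftn0.
Qed.

End FirstBlock.
End Sites.

Lemma hermitian_opC (C : numClosedFieldType) d (O : 'M[C]_d) :
  hermitian_op O -> forall a b, (O a b)^* = O b a.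
Proof. by rewrite /hermitian_op => O_herm a b; rewrite [in RHS]O_herm !mxE. Qed.

Section ShiftedObservable.
Variables (C : numClosedFieldType) (d n : nat) (O : 'M[C]_d).

Lemma permop_embedE (s : 'I_n -> 'I_n) j y x : mulop (permop C s) (embed j O) y x =
  \prod_(l < n) (if l == j :> nat then O (y (s l)) (x l) else (y (s l) == x l)%:R).
Proof. by rewrite permop_mulE; apply: eq_bigr => l _; rewrite relabelE. Qed.

Lemma permop_embed_relabel (s s' t : 'I_n -> 'I_n) (j : 'I_n) (j' : nat) :
  injective t -> t j = j' :> nat -> {morph t : l / s l >-> s' l} ->
  mulop (permop C s') (embed j' O) =2 permconj t (mulop (permop C s) (embed j O)).
Proof.
move=> t_inj tj ts y x; rewrite /permconj !permop_embedE (reindex_inj t_inj).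
apply: eq_bigr => l _; rewrite !relabelE -ts.
by rewrite -tj !(inj_eq val_inj) (inj_eq t_inj).
Qed.

(* For an involution [r], the hypotheses say r s r = s^-1 and r (s j) = j, which
   is what turns (U_s E_j)^dagger = E_j U_s^-1 back into the shape U_s E_j. *)
Lemma adjop_permop_embed (s r : 'I_n -> 'I_n) (j : 'I_n) : hermitian_op O ->
  injective (r \o s) -> r (s j) = j -> (forall l, s (r (s l)) = r l) ->
  adjop (mulop (permop C s) (embed j O)) =2 permconj r (mulop (permop C s) (embed j O)).
Proof.
move=> O_herm rs_inj rsj srs y x.
rewrite /adjop /permconj !permop_embedE rmorph_prod (reindex_inj rs_inj).
apply: eq_bigr => l _ /=; rewrite !relabelE srs.
have -> : (r (s l) == j :> nat) = (l == j :> nat).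
  by rewrite !(inj_eq val_inj) -{1}rsj (inj_eq rs_inj).
by case: ifP => _; rewrite ?hermitian_opC // conjC_nat eq_sym.
Qed.

End ShiftedObservable.

Section Estimators.
Variables (C : numClosedFieldType) (d n k : nat) (O : 'M[C]_d).
Local Notation A i := (@Aop C d n O k i).

Lemma Ok_twirl : Ok n O k =2 twirl (A 0).
Proof.
move=> y x; congr (_ * _); apply: eq_bigr => p _.
rewrite mul_adjop_permopE {1}/mulop /Aop /permconj mul0n.
by apply: eq_bigr => z _; rewrite permop_mulE.
Qed.

Lemma Tk_herm : adjop (Tk n O k) =2 Tk n O k.
Proof.
move=> y x; rewrite /Tk /adjop rmorphM rmorph_sum /= fmorphV rmorph_nat.
congr (_ * _); apply: eq_bigr => i _.
by rewrite rmorphD addrC; congr (_ + _); exact: conjCK.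
Qed.

Hypotheses (k_gt0 : (0 < k)%N) (k_le_n : (k <= n)%N).

Let site0 : 'I_n := Ordinal (leq_trans k_gt0 k_le_n).

Lemma twirl_Aop i : (i < n %/ k)%N -> twirl (A i) =2 twirl (A 0).
Proof.
move=> i_lt; set a := (i * k)%N.
have akn : (a + k <= n)%N.
  have : (i.+1 * k <= n %/ k * k)%N by rewrite leq_mul2r i_lt orbT.
  by have := leq_divM n k; rewrite /a mulSn; lia.
have a_cases : a = 0%N \/ (k <= a)%N.
  by rewrite /a; case: (i) => [|i']; [left | right; rewrite mulSn; lia].
have t_inj := block_swap_inj akn a_cases.
move=> y x; rewrite -(twirl_permconj (perm t_inj) (A 0)); apply: eq_twirl => {}y {}x.
rewrite /permconj !relabel_perm /Aop mul0n.
apply: (permop_embed_relabel O (j := site0) t_inj); last exact: block_swap_shift.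
by rewrite val_block_swap //= /block_swapn k_gt0.
Qed.

Lemma twirl_Aop0_herm : hermitian_op O -> adjop (twirl (A 0)) =2 twirl (A 0).
Proof.
move=> O_herm; have r_inj := block_reflect_inj k_le_n.
have rs_inj : injective (block_reflect k \o @shift_on n 0 k).
  exact: inj_comp r_inj (shift_on0_inj k_gt0 k_le_n).
move=> y x; rewrite -twirl_adjop -(twirl_permconj (perm r_inj) (A 0)).
apply: eq_twirl => {}y {}x; rewrite /permconj !relabel_perm /Aop mul0n.
apply: (adjop_permop_embed (j := site0)) => //; first exact: block_reflect_shift0.
exact: shift_block_reflect.
Qed.

Lemma twirl_Tk : hermitian_op O -> twirl (Tk n O k) =2 twirl (A 0).
Proof.
move=> O_herm y x; have m_gt0 : (0 < n %/ k)%N by rewrite divn_gt0.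
transitivity (((2 * (n %/ k))%:R)^-1 *
  \sum_(i < n %/ k) (twirl (A i) y x + twirl (adjop (A i)) y x)).
  rewrite /twirl /permconj /Tk -mulr_sumr mulrCA; congr (_ * _).
  rewrite exchange_big mulr_sumr; apply: eq_bigr => i _.
  by rewrite big_split mulrDr.
rewrite (eq_bigr (fun=> twirl (A 0) y x *+ 2)) => [|i _]; last first.
  move: (twirl_Aop0_herm O_herm y x).
  by rewrite twirl_adjop /adjop !twirl_Aop // => ->; rewrite mulr2n.
rewrite sumr_const card_ord -mulrnA -[twirl _ y x *+ _]mulr_natl mulKf //.
by rewrite pnatr_eq0 muln_eq0 negb_or -!lt0n m_gt0.
Qed.

End Estimators.

Theorem lemma2p18 (C : numClosedFieldType) (d n k : nat)
  (O rho : 'M[C]_d) :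
  hermitian_op O -> is_state rho ->
  (1 <= n)%N -> (1 <= k <= n)%N ->
  var n rho (Ok n O k) <= var n rho (Tk n O k).
Proof.
(* The hypothesis [1 <= n] is implied by [1 <= k <= n]. *)
move=> O_herm rho_state _ /andP[k_gt0 k_le_n].
rewrite (eq_var rho (Ok_twirl k O)) -(eq_var rho (twirl_Tk k_gt0 k_le_n O_herm)).
exact: var_twirl_le rho_state (Tk_herm k O).
Qed.
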